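(* Let $h,n\geq 2$ be integers. Every subgroup $U$ of $\{id\}\times S_n\leq G=S_h\times S_n$ is a neutrality group with respect to $(h,n)$, i.e. there exists a social preference function $F$ with $G_2(F)=U$. In particular, the set of neutrality groups with respect to $(h,n)$ is closed under taking subgroups and under conjugation by elements of $G$.
   Context: Permutations compose as $(\sigma\tau)(x)=\sigma(\tau(x))$; $[k]=\{1,\dots,k\}$. Let $H=[h]$ (individuals), $N=[n]$ (alternatives), $G=S_h\times S_n$. Linear orders on $N$ are identified with elements of $S_n$, and the set of preference profiles is $\mathcal{P}=(S_n)^h$. $G$ acts on $\mathcal{P}$ by $(p^{(\varphi,\psi)})_i=\psi\,p_{\varphi^{-1}(i)}$ for $i\in H$. A social preference function (SPF) is any function $F:\mathcal{P}\to S_n$. The symmetry group of $F$ is $G(F)=\{(\varphi,\psi)\in G: F(p^{(\varphi,\psi)})=\psi F(p)\ \forall p\in\mathcal{P}\}$, and its neutrality group is $G_2(F)=G(F)\cap(\{id\}\times S_n)$. A subgroup $U\leq\{id\}\times S_n$ is a neutrality group with respect to $(h,n)$ if $U=G_2(F)$ for some SPF $F$. *)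

From mathcomp Require Import all_boot all_fingroup.
Set Implicit Arguments. Unset Strict Implicit. Unset Printing Implicit Defensive.
Local Open Scope group_scope.

(* Composition of permutations in the paper's convention:
   (pcomp s t) x = s (t x).  Note MathComp's product satisfies (s * t) x = t (s x). *)
Definition pcomp n (s t : 'S_n) : 'S_n := t * s.

(* Preference profiles: h-tuples of linear orders on N = [n], i.e. elements of (S_n)^h.
   Individuals are indexed by 'I_h and alternatives by 'I_n. *)
Definition profile (h n : nat) := {ffun 'I_h -> 'S_n}.

Definition pact h n (phi : 'S_h) (psi : 'S_n) (p : profile h n) : profile h n :=
  [ffun i => pcomp psi (p (phi^-1 i))].

Definition SPF (h n : nat) := profile h n -> 'S_n.

Definition symmetry_group h n (F : SPF h n) : {set 'S_h * 'S_n} :=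
  [set g : 'S_h * 'S_n | [forall p : profile h n,
      F (pact g.1 g.2 p) == pcomp g.2 (F p)]].

Definition neutrality_group_of h n (F : SPF h n) : {set 'S_h * 'S_n} :=
  symmetry_group F :&: setX [set 1] [set: 'S_n].

Definition is_neutrality_group h n (V : {set 'S_h * 'S_n}) : Prop :=
  exists F : SPF h n, neutrality_group_of F = V.

Definition id_times h n (U : {set 'S_n}) : {set 'S_h * 'S_n} :=
  [set ((1 : 'S_h), u) | u in U].

Definition conjG h n (phi : 'S_h) (psi : 'S_n) (V : {set 'S_h * 'S_n})
  : {set 'S_h * 'S_n} :=
  [set (phi * x.1 * phi^-1, psi * x.2 * psi^-1) | x in V].

From mathcomp Require Import all_boot all_fingroup.
Set Implicit Arguments. Unset Strict Implicit. Unset Printing Implicit Defensive.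
Local Open Scope group_scope.

(* Any subgroup U of S_n is realised by the SPF that returns the order of a
   fixed individual i0, twisted by a fixed permutation x != 1 when that order
   lies outside U: relabelling by u in U does not change whether p i0 lies
   in U, while on the constant profile 1 the twist detects every b outside U.
   Conjugating an SPF by a relabelling c conjugates its neutrality group by c. *)

Section NeutralityGroups.

Variables h n : nat.
Implicit Types (F : SPF h n) (p : profile h n) (U : {group 'S_n}).

Definition neutral_wrt F (b : 'S_n) : Prop :=
  forall p, F (pact 1 b p) = F p * b.

Lemma pact1 (s : 'S_n) p : pact 1 s p = [ffun i => p i * s].
Proof. by apply/ffunP => i; rewrite !ffunE /pcomp invg1 perm1. Qed.

Lemma pact1M (s t : 'S_n) p : pact 1 s (pact 1 t p) = pact 1 (t * s) p.
Proof. by apply/ffunP => i; rewrite !pact1 !ffunE mulgA. Qed.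

Lemma pact11 p : pact 1 1 p = p.
Proof. by apply/ffunP => i; rewrite pact1 ffunE mulg1. Qed.

Lemma neutrality_groupP F (a : 'S_h) (b : 'S_n) :
  reflect (a = 1 /\ neutral_wrt F b) ((a, b) \in neutrality_group_of F).
Proof.
rewrite !inE /= andbT; apply: (iffP andP) => [[/forallP sym /eqP a1]|[a1 sym]].
  by subst a; split=> // p; apply/eqP/sym.
by subst a; split=> //; apply/forallP => p; apply/eqP/sym.
Qed.

Lemma mem_id_times (A : {set 'S_n}) (a : 'S_h) (b : 'S_n) :
  ((a, b) \in id_times h A) = (a == 1) && (b \in A).
Proof.
apply/imsetP/andP => [[u uA [-> ->]]|[/eqP-> bA]]; first by rewrite eqxx.
by exists b.
Qed.

Definition twisted_dictator (A : {set 'S_n}) (i0 : 'I_h) (x : 'S_n) : SPF h n :=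
  fun p => (if p i0 \in A then 1 else x) * p i0.

Lemma neutrality_group_twisted_dictator U i0 (x : 'S_n) :
  x != 1 -> neutrality_group_of (twisted_dictator U i0 x) = id_times h U.
Proof.
move=> x_neq1; apply/setP => -[a b]; rewrite mem_id_times.
apply/neutrality_groupP/andP => [[-> sym]|[/eqP-> bU]]; split=> //.
  have := sym [ffun=> 1]; rewrite /twisted_dictator pact1 !ffunE mul1g group1 mulg1.
  by case: ifP => // _ /mulIg x1; rewrite x1 eqxx in x_neq1.
by move=> p; rewrite /twisted_dictator pact1 ffunE groupMr // mulgA.
Qed.

Lemma id_times_is_neutrality_group U :
  0 < h -> 1 < n -> is_neutrality_group (id_times h U).
Proof.
move=> h_gt0 n_gt1; pose x := tperm (Ordinal (ltnW n_gt1)) (Ordinal n_gt1).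
have x_neq1 : x != 1.
  by apply/eqP => x1; have := odd_tperm (Ordinal (ltnW n_gt1)) (Ordinal n_gt1);
     rewrite -/x x1 odd_perm1.
exists (twisted_dictator U (Ordinal h_gt0) x).
exact: neutrality_group_twisted_dictator.
Qed.

Definition conj_SPF F (c : 'S_n) : SPF h n := fun p => F (pact 1 c p) * c^-1.

Lemma neutral_wrt_conj_SPF F (c b : 'S_n) :
  neutral_wrt (conj_SPF F c) b <-> neutral_wrt F (c^-1 * b * c).
Proof.
rewrite /neutral_wrt /conj_SPF; split=> sym q.
  have := sym (pact 1 c^-1 q); rewrite !pact1M mulVg pact11 mulgA => E.
  by apply: (mulIg c^-1); rewrite E !mulgA mulgK.
rewrite pact1M; have -> : b * c = c * (c^-1 * b * c) by rewrite !mulgA mulgV mul1g.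
by rewrite -pact1M sym !mulgA mulgK.
Qed.

Lemma neutrality_group_conj_SPF F (c : 'S_n) (phi : 'S_h) :
  neutrality_group_of (conj_SPF F c) = conjG phi c (neutrality_group_of F).
Proof.
apply/setP => -[a b]; apply/neutrality_groupP/imsetP.
  case=> -> /neutral_wrt_conj_SPF sym; exists (1, c^-1 * b * c).
    by apply/neutrality_groupP.
  by rewrite /= mulg1 mulgV !mulgA mulgV mul1g mulgK.
case=> -[a' b'] /neutrality_groupP [-> sym] [-> ->].
split; first by rewrite mulg1 mulgV.
by apply/neutral_wrt_conj_SPF; rewrite !mulgA mulVg mul1g mulgKV.
Qed.

End NeutralityGroups.

Theorem mainTheorem1 (h n : nat) (hh : 2 <= h) (hn : 2 <= n) :
  (forall U : {group 'S_n}, is_neutrality_group (id_times h U))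
  /\ (forall U U' : {group 'S_n}, is_neutrality_group (id_times h U) ->
        U' \subset U -> is_neutrality_group (id_times h U'))
  /\ (forall (V : {set 'S_h * 'S_n}) (phi : 'S_h) (psi : 'S_n),
        is_neutrality_group V -> is_neutrality_group (conjG phi psi V)).
Proof.
have neutralU (U : {group 'S_n}) : is_neutrality_group (id_times h U).
  exact: id_times_is_neutrality_group (ltnW hh) hn.
split; first exact: neutralU.
split; first by move=> U U' _ _; exact: neutralU.
move=> V phi psi [F <-]; exists (conj_SPF F psi).
exact: neutrality_group_conj_SPF.
Qed.
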